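(* For every finite simple graph $G$, $\varphi(G)\ge W(G)$.
   Context: Graphs are finite, undirected, without loops or multiple edges; $n=|V(G)|$ and $d(v)$ is the degree of $v$. For $V\subseteq V(G)$ define $W(V)=\sum_{v\in V}\frac{1}{n-d(v)}$ and $W(G)=W(V(G))$. A set $V\subseteq V(G)$ is a $\delta$-set in $G$ if $d(v)\le n-|V|$ for all $v\in V$. $G$ is called a generalized $r$-partite graph if $V(G)=V_1\cup\dots\cup V_r$ with $V_i\cap V_j=\emptyset$ for $i\ne j$, where each $V_i$ is a $\delta$-set in $G$. $\varphi(G)$ denotes the smallest integer $r$ such that $G$ is a generalized $r$-partite graph. *)

From mathcomp Require Import all_boot all_order all_algebra.
Set Implicit Arguments. Unset Strict Implicit. Unset Printing Implicit Defensive.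
Import GRing.Theory Num.Theory.

Definition simple_graph (T : finType) (e : rel T) : Prop :=
  symmetric e /\ irreflexive e.

Section Graph.
Variables (T : finType) (e : rel T).

Definition nv : nat := #|T|.
Definition deg (v : T) : nat := #|[set u | e v u]|.

Definition Wset (V : {set T}) : rat :=
  (\sum_(v in V) ((nv - deg v)%:R)^-1)%R.
Definition WG : rat := Wset [set: T].

Definition delta_set (V : {set T}) : bool :=
  [forall v in V, deg v <= nv - #|V|].

(* generalized r-partite: V(G) = V_1 u ... u V_r disjoint, each a delta-set.
   Encoded by the assignment f : T -> 'I_r, V_i = f^{-1}(i). *)
Definition gen_rpartite (r : nat) : bool :=
  [exists f : {ffun T -> 'I_r}, [forall i : 'I_r, delta_set [set v | f v == i]]].

Lemma deg_lt v : simple_graph e -> deg v < nv.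
Proof.
move=> [_ irr]; rewrite /deg /nv -[X in _ < X]cardsT.
apply: proper_card; apply/properP; split; first exact: subsetT.
exists v; first by rewrite in_setT. by rewrite inE irr.
Qed.

End Graph.

(* varphi(G): the smallest r such that G is generalized r-partite.
   Existence: r = n always works (singleton parts). *)
Lemma gen_rpartite_exists (T : finType) (e : rel T) :
  simple_graph e -> exists r, gen_rpartite e r.
Proof.
move=> Hg; exists #|T|; apply/existsP; exists [ffun v => enum_rank v]; apply/forallP => i.
apply/forallP => v; apply/implyP; rewrite inE ffunE => /eqP Hv.
have -> : [set v0 | [ffun v1 => enum_rank v1] v0 == i] = [set v].
  apply/setP => u; rewrite !inE ffunE -Hv.
  by apply/eqP/eqP => [/enum_rank_inj|->].
have := deg_lt v Hg; rewrite cards1 /nv subn1; case: #|T| => // n.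
Qed.

Definition varphi (T : finType) (e : rel T) (Hg : simple_graph e) : nat :=
  ex_minn (gen_rpartite_exists Hg).

(* Every part V of a partition into delta-sets has W(V) <= 1: each v in V has
   n - d(v) >= |V|, so each of the |V| summands is at most 1/|V|.  Summing over
   the varphi(G) parts of an optimal partition gives W(G) <= varphi(G). *)

From mathcomp Require Import all_boot all_order all_algebra.
Import Order.TTheory GRing.Theory Num.Theory.
Local Open Scope ring_scope.

Lemma sum_inv_card_le1 (R : realFieldType) (T : finType) (V : {set T}) (x : T -> R) :
  (forall v, v \in V -> #|V|%:R <= x v) -> \sum_(v in V) (x v)^-1 <= 1.
Proof.
move=> xV; have [->|[v0 v0V]] := set_0Vmem V; first by rewrite big_set0.
have V_gt0 : (0 < #|V|)%N by rewrite card_gt0; apply/set0Pn; exists v0.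
have V_pos : 0 < #|V|%:R :> R by rewrite ltr0n.
apply: le_trans (_ : \sum_(v in V) (#|V|%:R)^-1 <= 1).
  apply: ler_sum => v vV; rewrite lef_pV2 ?xV ?posrE //.
  exact: lt_le_trans (xV v vV).
by rewrite sumr_const -[_ *+ _]mulr_natr mulVf ?gt_eqF.
Qed.

Lemma Wset_delta_le1 (T : finType) (e : rel T) (V : {set T}) :
  delta_set e V -> Wset e V <= 1.
Proof.
move=> /forallP deltaV; apply: sum_inv_card_le1 => v vV.
have := deltaV v; rewrite vV /= => deg_le.
have card_le : (#|V| <= nv T)%N by rewrite /nv max_card.
by rewrite ler_nat -(subKn card_le) leq_sub2l.
Qed.

Lemma WG_partition {T : finType} (e : rel T) {r : nat} (f : T -> 'I_r) :
  WG e = \sum_(i < r) Wset e [set v | f v == i].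
Proof.
rewrite /WG /Wset (partition_big f predT) //=.
by apply: eq_bigr => i _; apply: eq_bigl => v; rewrite !inE.
Qed.

Theorem proposition2 (T : finType) (e : rel T) (Hg : simple_graph e) :
  (WG e <= (varphi Hg)%:R)%R.
Proof.
rewrite /varphi; case: ex_minnP => r /existsP [f /forallP delta_parts] _.
rewrite (WG_partition e f) -[X in _ <= X%:R](card_ord r) -sumr_const.
by apply: ler_sum => i _; apply: Wset_delta_le1.
Qed.
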